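(* Let $\mathbf{X}$ be a set of discrete random variables with sample space $\Omega(\mathbf{X})$, let $O$ be a positive unital circuit over $\mathbf{X}$, let $\rho$ be a density matrix of matching size, and let $q:\Omega(\mathbf{X})\to[0,1]$. Let $Q(\mathbf{x})=q(\mathbf{x})O(\mathbf{x})$ (a NoisePUnC). Then $\pi_{\mathbf{X}}(\mathbf{x})=\operatorname{Tr}[Q(\mathbf{x})\rho]$ is a sub-complete probability distribution: $\pi_{\mathbf{X}}(\mathbf{x})\ge 0$ for all $\mathbf{x}$ and $\sum_{\mathbf{x}\in\Omega(\mathbf{X})}\pi_{\mathbf{X}}(\mathbf{x})\le1$.
   Context: A density matrix is a PSD complex matrix of trace one; a POVM is a finite family of PSD matrices summing to the identity. A quantum operation from $d\times d$ to $d'\times d'$ matrices is $\Phi(A)=\sum_jK_jAK_j^*$ with $d'\times d$ matrices $K_j$, $\sum_jK_j^*K_j\le\mathbb{1}$ (Loewner order); it is unital if $\Phi(\mathbb{1}_d)=\mathbb{1}_{d'}$. A partition circuit over $\mathbf{X}=\{X_0,\dots,X_{N-1}\}$ is a rooted binary tree whose leaves are in bijection with the variables (leaf $k$ carries $X_k$ with finite sample space $\Omega(X_k)$), each internal unit $k$ having two children $k_l,k_r$; $\mathbf{x}_k$ denotes an assignment to the variables at leaves below $k$. A positive unital circuit assigns to each leaf $k$ a POVM $\{E_{x_k}\}_{x_k\in\Omega(X_k)}$ and to each internal unit $k$ a unital quantum operation $\Phi_k$, computing $O_k(\mathbf{x}_k)=E_{x_k}$ at leaves and $O_k(\mathbf{x}_k)=\Phi_k(O_{k_l}(\mathbf{x}_{k_l})\otimes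 O_{k_r}(\mathbf{x}_{k_r}))$ at internal units ($\otimes$ the Kronecker product); $O(\mathbf{x})=O_{\mathrm{root}}(\mathbf{x})$. A function on a finite set is a sub-complete probability distribution if its values are nonnegative and sum to at most $1$. *)

(* Complex scalars: an arbitrary numClosedFieldType C
   (e.g. the complex numbers); order on C: 0 <= z iff z is a nonnegative real. *)
From HB Require Import structures.
From mathcomp Require Import all_boot all_order all_algebra.
From mathcomp Require Import mxtens.
Set Implicit Arguments. Unset Strict Implicit. Unset Printing Implicit Defensive.
Import Order.TTheory GRing.Theory Num.Theory.
Local Open Scope ring_scope.

Section QDefs.
Variable C : numClosedFieldType.

Definition ctrmx {m n} (A : 'M[C]_(m, n)) : 'M[C]_(n, m) := (map_mx Num.conj A)^T.

Definition psd {d} (A : 'M[C]_d) : Prop :=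
  forall v : 'cV[C]_d, 0 <= (ctrmx v *m A *m v) 0 0.

Definition loewner_le {d} (A B : 'M[C]_d) : Prop := psd (B - A).

Definition density_matrix {d} (rho : 'M[C]_d) : Prop := psd rho /\ \tr rho = 1.

Definition is_POVM {d} {I : finType} (E : I -> 'M[C]_d) : Prop :=
  (forall a, psd (E a)) /\ \sum_(a : I) E a = 1%:M.

Definition kraus_apply {d' d} (K : seq 'M[C]_(d', d)) (A : 'M[C]_d) : 'M[C]_d' :=
  \sum_(Kj <- K) Kj *m A *m ctrmx Kj.

Definition quantum_operation {d' d} (K : seq 'M[C]_(d', d)) : Prop :=
  loewner_le (\sum_(Kj <- K) ctrmx Kj *m Kj) 1%:M.

Definition unital_quantum_operation {d' d} (K : seq 'M[C]_(d', d)) : Prop :=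
  quantum_operation K /\ kraus_apply K 1%:M = 1%:M.

Definition sub_complete {I : finType} (f : I -> C) : Prop :=
  (forall x, 0 <= f x) /\ \sum_(x : I) f x <= 1.
End QDefs.

(* Circuits over variables X_0..X_{N-1}, X_k with finite sample space T k.
   circuit d : a (binary-tree) circuit whose output is a d x d matrix.
   Node K l r : internal unit with operation Phi given by Kraus family K,
   mapping (dl*dr) x (dl*dr) matrices to d x d matrices. *)
Inductive circuit (C : numClosedFieldType) (N : nat) (T : 'I_N -> finType)
  : nat -> Type :=
| Leaf : forall (k : 'I_N) (d : nat), (T k -> 'M[C]_d) -> circuit C T d
| Node : forall (d dl dr : nat), seq 'M[C]_(d, dl * dr) ->
    circuit C T dl -> circuit C T dr -> circuit C T d.

Section Circuits.
Variables (C : numClosedFieldType) (N : nat) (T : 'I_N -> finType).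

Definition assignment := {dffun forall k : 'I_N, T k}.

Fixpoint leaves {d} (c : circuit C T d) : seq 'I_N :=
  match c with
  | Leaf k _ _ => [:: k]
  | Node _ _ _ _ l r => leaves l ++ leaves r
  end.

Definition partition_circuit {d} (c : circuit C T d) : Prop :=
  perm_eq (leaves c) (enum 'I_N).

Fixpoint positive_unital {d} (c : circuit C T d) : Prop :=
  match c with
  | Leaf k _ E => is_POVM E
  | Node _ _ _ K l r =>
      unital_quantum_operation K /\ positive_unital l /\ positive_unital r
  end.

Fixpoint circuit_eval {d} (c : circuit C T d) (x : assignment) : 'M[C]_d :=
  match c in circuit _ _ d0 return 'M[C]_d0 with
  | Leaf k _ E => E (x k)
  | Node _ _ _ K l r => kraus_apply K (circuit_eval l x *t circuit_eval r x)
  end.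
End Circuits.

(* Every O(x) is positive semidefinite: POVM elements are, and Kraus maps and
   Kronecker products preserve positivity (the latter through spectral
   decompositions).  Hence Tr[O(x) rho] >= 0, and q(x) in [0, 1] gives
   0 <= pi(x) <= Tr[O(x) rho].  Summing over x, the two children of a unit read
   disjoint sets of variables, so the sum of the tensor products factors as a
   tensor product of sums; the POVM normalisation at the leaves and unitality of
   the units then give sum_x O(x) = 1, whence sum_x pi(x) <= Tr rho = 1. *)

From HB Require Import structures.
From mathcomp Require Import all_boot all_order all_algebra.
From mathcomp Require Import mxtens sesquilinear spectral ring.
Set Implicit Arguments. Unset Strict Implicit. Unset Printing Implicit Defensive.
Import Order.TTheory GRing.Theory Num.Theory.
Local Open Scope ring_scope.

Section Matrices.
Variable C : numClosedFieldType.

Lemma ctrmxE m n (A : 'M[C]_(m, n)) i j : ctrmx A i j = (A j i)^*.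
Proof. by rewrite !mxE. Qed.

Lemma ctrmxK m n (A : 'M[C]_(m, n)) : ctrmx (ctrmx A) = A.
Proof. by apply/matrixP => i j; rewrite !ctrmxE conjCK. Qed.

Lemma ctrmxD m n (A B : 'M[C]_(m, n)) : ctrmx (A + B) = ctrmx A + ctrmx B.
Proof. by apply/matrixP => i j; rewrite !mxE rmorphD. Qed.

Lemma ctrmxZ m n c (A : 'M[C]_(m, n)) : ctrmx (c *: A) = c^* *: ctrmx A.
Proof. by apply/matrixP => i j; rewrite !mxE rmorphM. Qed.

Lemma ctrmxM m n p (A : 'M[C]_(m, n)) (B : 'M[C]_(n, p)) :
  ctrmx (A *m B) = ctrmx B *m ctrmx A.
Proof. by rewrite /ctrmx map_mxM trmx_mul. Qed.

Lemma ctrmx_tens m n p q (A : 'M[C]_(m, n)) (B : 'M[C]_(p, q)) :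
  ctrmx (A *t B) = ctrmx A *t ctrmx B.
Proof. by rewrite /ctrmx map_mxT trmx_tens. Qed.

Lemma ctrmx_delta m n (i : 'I_m) (j : 'I_n) :
  ctrmx (delta_mx i j : 'M[C]_(m, n)) = delta_mx j i.
Proof. by apply/matrixP => k l; rewrite ctrmxE !mxE rmorph_nat andbC. Qed.

Lemma conjC_polarization (a b : C) :
  (forall c, (c * a + c^* * b)^* = c * a + c^* * b) -> a^* = b.
Proof.
move=> real_comb.
have sum_ab : a^* + b^* = a + b.
  by have := real_comb 1; rewrite conjC1 !mul1r rmorphD.
have diff_ab : b^* - a^* = a - b.
  have := real_comb 'i.
  rewrite rmorphD !rmorphM /= conjCi rmorphN /= conjCi opprK.
  rewrite !mulNr -!mulrN -!mulrDr addrC.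
  by move/(mulfI (neq0Ci C)).
apply: (@pmulrnI _ 2) => //.
have -> : a^* *+ 2 = (a^* + b^*) - (b^* - a^*) by ring.
by rewrite sum_ab diff_ab; ring.
Qed.

Lemma tensmxDl m n p q (A A' : 'M[C]_(m, n)) (B : 'M[C]_(p, q)) :
  (A + A') *t B = A *t B + A' *t B.
Proof. by apply/matrixP => i j; rewrite !mxE mulrDl. Qed.

Lemma tensmxDr m n p q (A : 'M[C]_(m, n)) (B B' : 'M[C]_(p, q)) :
  A *t (B + B') = A *t B + A *t B'.
Proof. by apply/matrixP => i j; rewrite !mxE mulrDr. Qed.

Lemma tensmxZl m n p q c (A : 'M[C]_(m, n)) (B : 'M[C]_(p, q)) :
  (c *: A) *t B = c *: (A *t B).
Proof. by apply/matrixP => i j; rewrite !mxE mulrA. Qed.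

Lemma tensmxZr m n p q c (A : 'M[C]_(m, n)) (B : 'M[C]_(p, q)) :
  A *t (c *: B) = c *: (A *t B).
Proof. by apply/matrixP => i j; rewrite !mxE mulrCA. Qed.

Lemma tensmxMn m n p q (A : 'M[C]_(m, n)) (B : 'M[C]_(p, q)) a b :
  (A *+ a) *t (B *+ b) = (A *t B) *+ (a * b).
Proof. by rewrite -!scaler_nat tensmxZl tensmxZr scalerA -natrM. Qed.

Lemma tensmx_suml m n p q (I : Type) (r : seq I) (P : pred I)
    (F : I -> 'M[C]_(m, n)) (B : 'M[C]_(p, q)) :
  (\sum_(i <- r | P i) F i) *t B = \sum_(i <- r | P i) F i *t B.
Proof.
by apply: (big_morph (fun A => A *t B)) => [A A'|]; rewrite ?tensmxDl ?tens0mx.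
Qed.

Lemma tensmx_sumr m n p q (I : Type) (r : seq I) (P : pred I)
    (A : 'M[C]_(m, n)) (F : I -> 'M[C]_(p, q)) :
  A *t (\sum_(i <- r | P i) F i) = \sum_(i <- r | P i) A *t F i.
Proof.
by apply: (big_morph (fun B => A *t B)) => [B B'|]; rewrite ?tensmxDr ?tensmx0.
Qed.

Lemma tensmx11 m n : (1%:M : 'M[C]_m) *t (1%:M : 'M[C]_n) = 1%:M.
Proof.
apply/matrixP => i j; rewrite !mxE -natrM mulnb -xpair_eqE -!surjective_pairing.
by rewrite (inj_eq (can_inj (@mxtens_unindexK _ _))).
Qed.

Lemma mxnatmulI m n k : (0 < k)%N -> injective (fun A : 'M[C]_(m, n) => A *+ k).
Proof.
move=> k_gt0 A B /=; rewrite -!scaler_nat; apply: scalerI.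
by rewrite pnatr_eq0 -lt0n.
Qed.

Lemma kraus_apply_sum d' d (K : seq 'M[C]_(d', d)) (I : finType)
    (F : I -> 'M[C]_d) :
  kraus_apply K (\sum_i F i) = \sum_i kraus_apply K (F i).
Proof.
rewrite /kraus_apply exchange_big /=; apply: eq_bigr => Kj _.
by rewrite mulmx_sumr mulmx_suml.
Qed.

Lemma kraus_applyMn d' d (K : seq 'M[C]_(d', d)) (A : 'M[C]_d) k :
  kraus_apply K (A *+ k) = kraus_apply K A *+ k.
Proof.
rewrite /kraus_apply -sumrMnl; apply: eq_bigr => Kj _.
by rewrite -!scaler_nat -scalemxAr -scalemxAl.
Qed.
End Matrices.

Section Psd.
Variable C : numClosedFieldType.

Lemma psd0 d : psd (0 : 'M[C]_d).
Proof. by move=> v; rewrite mulmx0 mul0mx mxE. Qed.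

Lemma psdD d (A B : 'M[C]_d) : psd A -> psd B -> psd (A + B).
Proof. by move=> A_psd B_psd v; rewrite mulmxDr mulmxDl mxE addr_ge0. Qed.

Lemma psdZ d c (A : 'M[C]_d) : 0 <= c -> psd A -> psd (c *: A).
Proof. by move=> c_ge0 A_psd v; rewrite -scalemxAr -scalemxAl mxE mulr_ge0. Qed.

Lemma psd_sum d (I : Type) (r : seq I) (P : pred I) (F : I -> 'M[C]_d) :
  (forall i, P i -> psd (F i)) -> psd (\sum_(i <- r | P i) F i).
Proof. by move=> F_psd; apply: big_ind => //; [exact: psd0 | exact: psdD]. Qed.

Lemma psd_congr d d' (K : 'M[C]_(d', d)) (A : 'M[C]_d) :
  psd A -> psd (K *m A *m ctrmx K).
Proof.
by move=> A_psd v; have := A_psd (ctrmx K *m v); rewrite ctrmxM ctrmxK !mulmxA.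
Qed.

Lemma psd_kraus d' d (K : seq 'M[C]_(d', d)) (A : 'M[C]_d) :
  psd A -> psd (kraus_apply K A).
Proof. by move=> A_psd; apply: psd_sum => Kj _; apply: psd_congr. Qed.

Lemma psd_gram d k (W : 'M[C]_(d, k)) : psd (W *m ctrmx W).
Proof.
move=> v; rewrite mulmxA -[W in ctrmx v *m W]ctrmxK -ctrmxM -mulmxA mxE.
by apply: sumr_ge0 => l _; rewrite ctrmxE mulrC mul_conjC_ge0.
Qed.

Section PsdHermitian.
Variables (d : nat) (A : 'M[C]_d).
Hypothesis A_psd : psd A.

Let Q (u v : 'cV[C]_d) := (ctrmx u *m A *m v) 0 0.

Let Q_real u : (Q u u)^* = Q u u.
Proof. exact: geC0_conj (A_psd u). Qed.

Let Q_expand u v c : Q (u + c *: v) (u + c *: v) =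
  Q u u + (c * Q u v + c^* * Q v u) + c^* * c * Q v v.
Proof.
rewrite /Q ctrmxD ctrmxZ !mulmxDl !mulmxDr -!scalemxAl -!scalemxAr !mxE.
by rewrite mulrA; ring.
Qed.

(* Positivity only makes Q real on the diagonal; polarization does the rest. *)
Let Q_conj u v : (Q u v)^* = Q v u.
Proof.
apply: conjC_polarization => c; have := Q_real (u + c *: v).
rewrite Q_expand; set X := (c * _ + _).
rewrite 2!rmorphD !rmorphM /= conjCK !Q_real [c * _]mulrC.
by move/addIr/addrI.
Qed.

Lemma psd_hermitian : A \is hermsymmx.
Proof.
apply/is_hermitianmxP; rewrite expr0 scale1r; apply/matrixP => i j.
have Q_delta k l : Q (delta_mx k 0) (delta_mx l 0) = A k l.
  by rewrite /Q ctrmx_delta -rowE -colE !mxE.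
by rewrite !mxE -!Q_delta Q_conj.
Qed.

Lemma psd_spectral_decomp : exists (c : 'I_d -> C) (w : 'I_d -> 'cV[C]_d),
  (forall i, 0 <= c i) /\ A = \sum_i c i *: (w i *m ctrmx (w i)).
Proof.
have /hermitian_normalmx/orthomx_spectralP := psd_hermitian.
set P := spectralmx A; set D := spectral_diag A.
have P_unitary : P \is unitarymx := spectral_unitarymx A.
have PPt : P *m ctrmx P = 1%:M by rewrite /ctrmx map_trmx; apply/unitarymxP.
rewrite invmx_unitary // -map_trmx -/(ctrmx P) => A_spectral.
exists (fun i => D 0 i), (fun i => ctrmx P *m delta_mx i 0); split.
- move=> i; have := A_psd (ctrmx P *m delta_mx i 0).
  rewrite ctrmxM ctrmxK ctrmx_delta {1}A_spectral !mulmxA.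
  rewrite -(mulmxA _ P) PPt mulmx1 -(mulmxA _ P) PPt mulmx1 -rowE -colE !mxE.
  by rewrite eqxx mulr1n.
- rewrite {1}A_spectral diag_mx_sum_delta mulmx_sumr mulmx_suml.
  apply: eq_bigr => i _; rewrite ctrmxM ctrmxK ctrmx_delta -scalemxAr -scalemxAl.
  by rewrite -(mul_delta_mx (0 : 'I_1)) !mulmxA.
Qed.
End PsdHermitian.

Lemma psd_tens dl dr (A : 'M[C]_dl) (B : 'M[C]_dr) :
  psd A -> psd B -> psd (A *t B).
Proof.
move=> /psd_spectral_decomp [a [v [a_ge0 ->]]].
move=> /psd_spectral_decomp [b [w [b_ge0 ->]]].
rewrite tensmx_suml; apply: psd_sum => i _; rewrite tensmx_sumr.
apply: psd_sum => j _; rewrite tensmxZl tensmxZr scalerA.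
apply: psdZ; first exact: mulr_ge0.
by rewrite -tensmx_mul -ctrmx_tens; apply: psd_gram.
Qed.

Lemma psd_mxtrace_mul_ge0 d (A B : 'M[C]_d) : psd A -> psd B -> 0 <= \tr (A *m B).
Proof.
move=> /psd_spectral_decomp [a [v [a_ge0 ->]]] B_psd.
rewrite mulmx_suml linear_sum /=; apply: sumr_ge0 => i _.
rewrite -scalemxAl mxtraceZ mulr_ge0 // -mulmxA mxtrace_mulC trace_mx11.
exact: B_psd.
Qed.
End Psd.

Section Assignments.
Variables (N : nat) (T : 'I_N -> finType).
Local Notation Omega := (assignment T).

Definition depends_on (L : seq 'I_N) (X : Type) (F : Omega -> X) :=
  forall x y : Omega, {in L, forall k, x k = y k} -> F x = F y.

Definition splice (L : seq 'I_N) (x y : Omega) : Omega :=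
  @finfun _ (fun k => T k) (fun k => if k \in L then x k else y k).

Lemma spliceE L x y k : splice L x y k = if k \in L then x k else y k.
Proof. by rewrite ffunE. Qed.

Definition update k (x : Omega) (t : T k) : Omega :=
  @finfun _ (fun j => T j) (@dfwith _ (fun j => T j) (fun j => x j) k t).

Lemma update_eq k x (t : T k) : update x t k = t.
Proof. by rewrite ffunE dfwith_in. Qed.

Lemma update_neq k x (t : T k) j : k != j -> update x t j = x j.
Proof. by move=> neq_kj; rewrite ffunE dfwith_out. Qed.

Lemma sum_coord (V : nmodType) k (E : T k -> V) :
  (\sum_(x : Omega) E (x k)) *+ #|T k| = (\sum_(t : T k) E t) *+ #|Omega|.
Proof.
have swap_coord : involutive (fun p : Omega * T k => (update p.1 p.2, p.1 k)).
  move=> [x t] /=; rewrite update_eq; congr (_, _); apply/ffunP => j.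
  by have [<-|neq_kj] := eqVneq k j; rewrite ?update_eq // !update_neq.
rewrite -!sumr_const exchange_big !pair_bigA /=.
by rewrite [RHS](reindex_inj (inv_inj swap_coord)).
Qed.

Lemma sum_splice (V : nmodType) (L : seq 'I_N) (F : Omega -> Omega -> V) :
  \sum_(x : Omega) \sum_(y : Omega) F x y =
  \sum_(x : Omega) \sum_(y : Omega) F (splice L x y) (splice L y x).
Proof.
have swap_L :
    involutive (fun p : Omega * Omega => (splice L p.1 p.2, splice L p.2 p.1)).
  move=> [x y]; congr (_, _); apply/ffunP => k;
    by rewrite !spliceE; case: (k \in L).
by rewrite !pair_big (reindex_inj (inv_inj swap_L)).
Qed.
End Assignments.

Section Circuits.
Variables (C : numClosedFieldType) (N : nat) (T : 'I_N -> finType).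
Local Notation Omega := (assignment T).

Lemma sum_tens_independent m n p q (L R : seq 'I_N)
    (A : Omega -> 'M[C]_(m, n)) (B : Omega -> 'M[C]_(p, q)) :
  depends_on L A -> depends_on R B -> ~~ has (mem L) R ->
  (\sum_x A x) *t (\sum_x B x) = (\sum_x A x *t B x) *+ #|Omega|.
Proof.
move=> A_L B_R /hasPn LR_disjoint.
rewrite tensmx_suml; under eq_bigr do rewrite tensmx_sumr.
rewrite (sum_splice L) -sumrMnl; apply: eq_bigr => x _.
rewrite -sumr_const; apply: eq_bigr => y _.
have -> : A (splice L x y) = A x by apply: A_L => k k_L; rewrite spliceE k_L.
suff -> : B (splice L y x) = B x by [].
by apply: B_R => k k_R; rewrite spliceE ifN; last exact: LR_disjoint.
Qed.

Lemma circuit_eval_depends d (c : circuit C T d) :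
  depends_on (leaves c) (circuit_eval c).
Proof.
elim: c => [k d' E | d' dl dr K l IHl r IHr] x y eq_xy /=.
  by rewrite eq_xy ?mem_head.
rewrite (IHl x y) ?(IHr x y) // => k k_in.
  by apply: eq_xy; rewrite mem_cat k_in orbT.
by apply: eq_xy; rewrite mem_cat k_in.
Qed.

Lemma circuit_eval_psd d (c : circuit C T d) :
  positive_unital c -> forall x, psd (circuit_eval c x).
Proof.
elim: c => [k d' E [E_psd _] x | d' dl dr K l IHl r IHr [_ [l_pos r_pos]] x] /=.
  exact: E_psd.
by apply/psd_kraus/psd_tens; [exact: IHl | exact: IHr].
Qed.

(* The leaves of a subcircuit need not carry every variable, so the sum over all
   of Omega counts each assignment of its leaf variables
   #|Omega| / \prod_(k <- leaves c) #|T k| times. *)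
Lemma circuit_eval_sum d (c : circuit C T d) :
  (0 < #|Omega|)%N -> uniq (leaves c) -> positive_unital c ->
  (\sum_x circuit_eval c x) *+ (\prod_(k <- leaves c) #|T k|) = 1%:M *+ #|Omega|.
Proof.
move=> Omega_gt0; elim: c => [k d' E | d' dl dr K l IHl r IHr] /=.
  by move=> _ [_ E_sum]; rewrite big_seq1 sum_coord E_sum.
rewrite cat_uniq => /and3P [l_uniq lr_disjoint r_uniq].
move=> [[_ K_unital] [l_pos r_pos]].
rewrite big_cat /= -kraus_apply_sum; apply: (mxnatmulI Omega_gt0) => /=.
rewrite -!kraus_applyMn mulrnAC.
have l_dep := @circuit_eval_depends _ l; have r_dep := @circuit_eval_depends _ r.
rewrite -(sum_tens_independent l_dep r_dep) //.
by rewrite -tensmxMn IHl ?IHr // tensmxMn tensmx11 mulrnA !kraus_applyMn K_unital.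
Qed.

Lemma prod_card_partition (s : seq 'I_N) :
  perm_eq s (enum 'I_N) -> \prod_(k <- s) #|T k| = #|Omega|.
Proof.
move=> s_perm; rewrite (perm_big _ s_perm) card_dep_ffun foldrE big_image.
by rewrite -big_enum.
Qed.
End Circuits.

Unset Implicit Arguments.

Theorem proposition16 (C : numClosedFieldType) (N : nat) (T : 'I_N -> finType)
  (d : nat) (O : circuit C T d) (rho : 'M[C]_d) (q : assignment T -> C) :
  partition_circuit O ->
  positive_unital O ->
  density_matrix rho ->
  (forall x, 0 <= q x <= 1) ->
  sub_complete (fun x : assignment T => \tr ((q x *: circuit_eval O x) *m rho)).
Proof.
move=> O_partition O_pos [rho_psd rho_tr1] q01.
have tr_ge0 x : 0 <= \tr (circuit_eval O x *m rho).
  by apply: psd_mxtrace_mul_ge0 => //; exact: circuit_eval_psd.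
have trZ x :
    \tr ((q x *: circuit_eval O x) *m rho) = q x * \tr (circuit_eval O x *m rho).
  by rewrite -scalemxAl mxtraceZ.
split=> [x|]; first by have /andP[q_ge0 _] := q01 x; rewrite trZ mulr_ge0.
apply: (@le_trans _ _ (\sum_x \tr (circuit_eval O x *m rho))).
  apply: ler_sum => x _; have /andP[_ q_le1] := q01 x.
  by rewrite trZ ler_piMl.
have [Omega_empty|Omega_gt0] := posnP #|assignment T|.
  by rewrite big_pred0 // => x; have := card0_eq Omega_empty x; rewrite !inE.
have O_uniq : uniq (leaves O) by rewrite (perm_uniq O_partition) enum_uniq.
have := circuit_eval_sum Omega_gt0 O_uniq O_pos.
rewrite prod_card_partition // => /(mxnatmulI Omega_gt0) O_sum1.
by rewrite -linear_sum -mulmx_suml O_sum1 mul1mx /= rho_tr1.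
Qed.
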